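(* Let $\alpha>0$ and let $a:\mathbb{R}\to[\alpha,\infty)$ and $f:\mathbb{R}\to\mathbb{R}$ be slowly oscillating. Then the function $F(t):=\int_{-\infty}^te^{-\int_s^ta(r)\,dr}f(s)\,ds$, $t\in\mathbb{R}$, is slowly oscillating.
   Context: In this statement a function $g:\mathbb{R}\to\mathbb{R}$ is called slowly oscillating if it is bounded and continuous (hence uniformly continuous) and for every $\omega\in\mathbb{R}$, $\lim_{|t|\to+\infty}|g(t+\omega)-g(t)|=0$. *)

From Stdlib Require Import Reals.
From Coquelicot Require Import Coquelicot.
Open Scope R_scope.

Definition slowly_oscillating (g : R -> R) : Prop :=
  (exists M : R, forall t : R, Rabs (g t) <= M) /\
  (forall t : R, continuous g t) /\
  (forall w : R,
     is_lim (fun t => Rabs (g (t + w) - g t)) p_infty 0 /\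
     is_lim (fun t => Rabs (g (t + w) - g t)) m_infty 0).

(* For y' = -a y + g the integrating factor is E(t) = exp (int_0^t a).  Since
   a >= alpha > 0, E grows at least like exp (alpha t), which gives
   - |int_u^v E k| <= (sup |k| / alpha) (E v - E u), and
   - the dissipation estimate: every solution satisfies
       |y t| <= |y x| exp (-alpha (t - x)) + sup_[x,t] |g| / alpha.
   The improper integral F(t) = int_{-oo}^t exp (-int_s^t a) f(s) ds equals
   E(t)^-1 int_{-oo}^t E f: it exists by the Cauchy criterion and the first
   estimate, is bounded by sup |f| / alpha, and solves F' = -a F + f.
   For a shift w, D(t) = F(t+w) - F(t) solves D' = -a D + g_w with
   g_w(s) = (a s - a (s+w)) F(s+w) + (f(s+w) - f s).  As a and f are slowly
   oscillating, g_w is small on long windows near +oo and -oo, so the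
   dissipation estimate on such a window makes D small there. *)

From Stdlib Require Import Reals Lra.
From Coquelicot Require Import Coquelicot.
Open Scope R_scope.

Ltac ring_R :=
  do 3 (unfold scal, plus, opp, minus, zero, one, Hierarchy.mult; simpl);
  match goal with |- ?x = ?y => change (@eq R x y) end; ring.

Lemma continuous_Rplus (g k : R -> R) x :
  continuous g x -> continuous k x -> continuous (fun y => g y + k y) x.
Proof. intros; apply (@continuous_plus R_UniformSpace R_AbsRing R_NormedModule); auto. Qed.

Lemma continuous_Rminus (g k : R -> R) x :
  continuous g x -> continuous k x -> continuous (fun y => g y - k y) x.
Proof. intros; apply (@continuous_minus R_UniformSpace R_AbsRing R_NormedModule); auto. Qed.

Lemma continuous_Rmult (g k : R -> R) x :
  continuous g x -> continuous k x -> continuous (fun y => g y * k y) x.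
Proof. intros; apply (@continuous_mult R_UniformSpace R_AbsRing); auto. Qed.

Lemma continuous_shift (g : R -> R) w (Hg : forall t, continuous g t) x :
  continuous (fun y => g (y + w)) x.
Proof.
  apply (continuous_comp (fun y => y + w) g); [| apply Hg].
  apply continuous_Rplus; [apply continuous_id | apply continuous_const].
Qed.

Lemma continuous_of_derive (g g' : R -> R) (Hg : forall t, is_derive g t (g' t)) t :
  continuous g t.
Proof. apply (@ex_derive_continuous R_AbsRing R_NormedModule); eexists; apply Hg. Qed.

Lemma ex_RInt_of_continuous (g : R -> R) (Hg : forall t, continuous g t) x y :
  ex_RInt g x y.
Proof. apply (@ex_RInt_continuous R_CompleteNormedModule); intros; apply Hg. Qed.

Lemma is_derive_primitive (g : R -> R) (Hg : forall t, continuous g t) t :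
  is_derive (fun t => RInt g 0 t) t (g t).
Proof.
  apply is_derive_RInt with 0; [| apply Hg].
  apply filter_forall; intros.
  apply (@RInt_correct R_CompleteNormedModule), ex_RInt_of_continuous, Hg.
Qed.

Lemma is_derive_val (g : R -> R) x l l' : is_derive g x l -> l = l' -> is_derive g x l'.
Proof. intros H ->; exact H. Qed.

Lemma is_derive_shift (g : R -> R) w t l :
  is_derive g (t + w) l -> is_derive (fun t => g (t + w)) t l.
Proof.
  intros H. eapply is_derive_val.
  - apply (is_derive_comp g (fun t => t + w)); [exact H |].
    apply (@is_derive_plus R_AbsRing R_NormedModule); [apply is_derive_id | apply is_derive_const].
  - ring_R.
Qed.

Lemma exp_le_mono x y : x <= y -> exp x <= exp y.
Proof. intros [H | ->]; [left; apply exp_increasing, H | right; reflexivity]. Qed.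

Lemma exp_small alpha (Halpha : 0 < alpha) d (Hd : 0 < d) :
  exists K, forall y, y < K -> exp (alpha * y) < d.
Proof.
  exists (ln d / alpha). intros y Hy. rewrite <- (exp_ln d Hd). apply exp_increasing.
  apply Rmult_lt_reg_r with (/ alpha); [apply Rinv_0_lt_compat; lra |].
  replace (alpha * y * / alpha) with y by (field; lra). exact Hy.
Qed.

Lemma eventually_small_on_window (u : R -> R) (L : Rbar)
  (HL : L = p_infty \/ L = m_infty) (Hu : is_lim u L 0) (d : posreal) K (HK : 0 <= K) :
  Rbar_locally L (fun t => forall s, t - K <= s <= t -> Rabs (u s) < d).
Proof.
  apply is_lim_spec in Hu. specialize (Hu d).
  destruct HL as [-> | ->]; destruct Hu as [T HT]; simpl in HT;
    [exists (T + K) | exists T]; intros t Ht s Hs;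
    specialize (HT s ltac:(lra)); rewrite Rminus_0_r in HT; exact HT.
Qed.

Section IntegratingFactor.

Variables (a : R -> R) (alpha : R).
Hypothesis a_cont : forall t, continuous a t.

Definition weight (t : R) : R := exp (RInt a 0 t).

Lemma weight_pos t : 0 < weight t.
Proof. apply exp_pos. Qed.

Lemma RInt_a_split s t : RInt a s t = RInt a 0 t - RInt a 0 s.
Proof.
  pose proof (RInt_Chasles a 0 s t (ex_RInt_of_continuous a a_cont _ _)
                (ex_RInt_of_continuous a a_cont _ _)) as H.
  unfold plus in H; simpl in H. lra.
Qed.

Lemma weight_derive t : is_derive weight t (a t * weight t).
Proof.
  apply (is_derive_comp exp (fun s => RInt a 0 s));
    [apply is_derive_exp | apply is_derive_primitive, a_cont].
Qed.

Lemma weight_continuous t : continuous weight t.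
Proof. exact (continuous_of_derive _ _ weight_derive t). Qed.

(* Along a solution of y' = -a y + g, (weight * y)' = weight * g. *)
Lemma weighted_variation (y g : R -> R)
  (Hy : forall s, is_derive y s (- a s * y s + g s)) (Hg : forall s, continuous g s) x t :
  weight t * y t - weight x * y x = RInt (fun s => weight s * g s) x t.
Proof.
  assert (Hi : is_RInt (fun s => weight s * g s) x t
                 (minus (weight t * y t) (weight x * y x))).
  { apply (@is_RInt_derive R_CompleteNormedModule (fun s => weight s * y s)).
    - intros s _. eapply is_derive_val.
      + apply (@is_derive_mult R_AbsRing); [apply weight_derive | apply Hy | intros; ring_R].
      + ring_R.
    - intros s _. apply continuous_Rmult; [apply weight_continuous | apply Hg]. }
  rewrite (is_RInt_unique _ _ _ _ Hi). ring_R.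
Qed.

Hypothesis a_lower : forall t, alpha <= a t.

Lemma weight_decay x t : x <= t -> weight x <= weight t * exp (- alpha * (t - x)).
Proof.
  intros Hxt.
  assert (Hgrowth : alpha * (t - x) <= RInt a x t).
  { replace (alpha * (t - x)) with (RInt (fun _ => alpha) x t)
      by (rewrite RInt_const; ring_R).
    apply RInt_le; [exact Hxt | apply ex_RInt_const | apply ex_RInt_of_continuous, a_cont |].
    intros; apply a_lower. }
  unfold weight. rewrite <- exp_plus. apply exp_le_mono.
  rewrite (RInt_a_split x t) in Hgrowth. lra.
Qed.

(* Since weight 0 = 1, the weight is below exp (alpha v) on (-oo, 0]. *)
Lemma weight_le_exp v : v <= 0 -> weight v <= exp (alpha * v).
Proof.
  intros Hv. eapply Rle_trans; [apply (weight_decay v 0 Hv) |].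
  unfold weight. rewrite RInt_point. unfold zero; simpl. rewrite exp_0.
  rewrite Rmult_1_l. right. f_equal. ring.
Qed.

Hypothesis alpha_pos : 0 < alpha.

Lemma weighted_RInt_bound (k : R -> R) (Hk : forall t, continuous k t) u v c
  (Huv : u <= v) (Hb : forall s, u <= s <= v -> Rabs (k s) <= c) :
  Rabs (RInt (fun s => weight s * k s) u v) <= c / alpha * (weight v - weight u).
Proof.
  assert (c_nonneg : 0 <= c) by (eapply Rle_trans; [apply Rabs_pos | apply (Hb u); lra]).
  assert (Hftc : is_RInt (fun s => c / alpha * (a s * weight s)) u v
                   (c / alpha * (weight v - weight u))).
  { replace (c / alpha * (weight v - weight u))
      with (minus (c / alpha * weight v) (c / alpha * weight u)) by ring_R.
    apply (@is_RInt_derive R_CompleteNormedModule (fun s => c / alpha * weight s)).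
    - intros s _. apply is_derive_scal, weight_derive.
    - intros s _. apply continuous_Rmult; [apply continuous_const |].
      apply continuous_Rmult; [apply a_cont | apply weight_continuous]. }
  assert (Hcont : forall s, continuous (fun s => weight s * k s) s)
    by (intros; apply continuous_Rmult; [apply weight_continuous | apply Hk]).
  rewrite <- (is_RInt_unique _ _ _ _ Hftc).
  eapply Rle_trans; [apply abs_RInt_le; [exact Huv | apply ex_RInt_of_continuous, Hcont] |].
  apply RInt_le; [exact Huv | | exists (c / alpha * (weight v - weight u)); exact Hftc |].
  - apply ex_RInt_of_continuous. intros s.
    apply (continuous_comp (fun s => weight s * k s) Rabs); [apply Hcont | apply continuous_Rabs].
  - intros s Hs. rewrite Rabs_mult, (Rabs_pos_eq (weight s)) by (left; apply weight_pos).
    assert (Hks := Hb s ltac:(lra)). pose proof (weight_pos s). pose proof (a_lower s).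
    set (q := c / alpha).
    assert (Hc : c = q * alpha) by (unfold q; field; lra).
    assert (0 <= q * weight s) by (apply Rmult_le_pos; [unfold q; apply Rdiv_le_0_compat |]; lra).
    apply Rle_trans with (weight s * c); [apply Rmult_le_compat_l; lra |].
    rewrite Hc. nra.
Qed.

Lemma dissipation_estimate (y g : R -> R)
  (Hy : forall s, is_derive y s (- a s * y s + g s)) (Hg : forall s, continuous g s)
  x t C eps (Hxt : x <= t) (HC : Rabs (y x) <= C)
  (Hge : forall s, x <= s <= t -> Rabs (g s) <= eps) :
  Rabs (y t) <= C * exp (- alpha * (t - x)) + eps / alpha.
Proof.
  assert (Hint := weighted_RInt_bound g Hg x t eps Hxt Hge).
  rewrite <- (weighted_variation y g Hy Hg x t) in Hint.
  assert (Hdec := weight_decay x t Hxt).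
  assert (Htri := Rabs_triang_inv (weight t * y t) (weight x * y x)).
  rewrite !Rabs_mult, !(Rabs_pos_eq (weight _)) in Htri by (left; apply weight_pos).
  assert (0 <= eps / alpha).
  { apply Rdiv_le_0_compat; [eapply Rle_trans; [apply Rabs_pos | apply (Hge t); lra] | lra]. }
  pose proof (weight_pos x). pose proof (weight_pos t).
  assert (Hyx : weight x * Rabs (y x) <= weight t * exp (- alpha * (t - x)) * C).
  { apply Rle_trans with (weight x * C); [apply Rmult_le_compat_l; lra |].
    apply Rmult_le_compat_r; [eapply Rle_trans; [apply Rabs_pos | exact HC] | exact Hdec]. }
  apply Rmult_le_reg_l with (weight t); [lra |]. nra.
Qed.

End IntegratingFactor.

Lemma is_RInt_gen_of_tails (h : R -> R) t l (Hex : forall x, ex_RInt h x t)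
  (Htail : forall eps : posreal, exists X, forall x, x < X -> Rabs (RInt h x t - l) < eps) :
  is_RInt_gen h (Rbar_locally m_infty) (at_point t) l.
Proof.
  intros P [eps HP]. destruct (Htail eps) as [X HX].
  apply Filter_prod with (fun x => x < X) (fun y => y = t).
  - exists X; auto.
  - reflexivity.
  - intros x y Hx ->. exists (RInt h x t). split.
    + apply (@RInt_correct R_CompleteNormedModule), Hex.
    + apply HP, HX, Hx.
Qed.

Lemma RInt_tail_limit (h : R -> R) (Hc : forall t, continuous h t)
  (Hcauchy : forall eps : posreal,
     exists X, forall u v, u < X -> v < X -> Rabs (RInt h u v) < eps) :
  exists L, forall eps : posreal, exists X, forall x, x < X -> Rabs (RInt h x 0 - L) < eps.
Proof.
  destruct (proj1 (@filterlim_locally_cauchy R R_CompleteSpace (Rbar_locally m_infty)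
                     (Rbar_locally_filter _) (fun x => RInt h x 0))) as [L HL].
  - intros eps. destruct (Hcauchy eps) as [X HX]. exists (fun x => x < X). split.
    + exists X; auto.
    + intros u v Hu Hv.
      pose proof (RInt_Chasles h v u 0 (ex_RInt_of_continuous h Hc _ _)
                    (ex_RInt_of_continuous h Hc _ _)) as HC.
      unfold plus in HC; simpl in HC. change (Rabs (RInt h v 0 - RInt h u 0) < eps).
      replace (RInt h v 0 - RInt h u 0) with (RInt h v u) by lra. apply HX; auto.
  - exists L. intros eps. destruct (proj1 (filterlim_locally _ _) HL eps) as [X HX].
    exists X. intros x Hx. apply HX, Hx.
Qed.

Section ForcedSolution.

Variables (a f : R -> R) (alpha M : R).
Hypothesis a_cont : forall t, continuous a t.
Hypothesis a_lower : forall t, alpha <= a t.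
Hypothesis alpha_pos : 0 < alpha.
Hypothesis f_cont : forall t, continuous f t.
Hypothesis f_bound : forall t, Rabs (f t) <= M.

Lemma bound_nonneg : 0 <= M.
Proof. eapply Rle_trans; [apply Rabs_pos | apply (f_bound 0)]. Qed.

(* The forcing seen through the integrating factor; its primitive from -oo
   is weight * F. *)
Definition weighted_forcing (s : R) : R := weight a s * f s.

Lemma weighted_forcing_continuous t : continuous weighted_forcing t.
Proof. apply continuous_Rmult; [apply weight_continuous, a_cont | apply f_cont]. Qed.

Lemma weighted_forcing_RInt_bound u v :
  u <= v -> Rabs (RInt weighted_forcing u v) <= M / alpha * weight a v.
Proof.
  intros Huv. eapply Rle_trans.
  - apply (weighted_RInt_bound a alpha a_cont a_lower alpha_pos f f_cont u v M Huv).
    intros; apply f_bound.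
  - pose proof (weight_pos a u). pose proof bound_nonneg.
    apply Rmult_le_compat_l; [apply Rdiv_le_0_compat |]; lra.
Qed.

Lemma weighted_forcing_cauchy (eps : posreal) :
  exists X, forall u v, u < X -> v < X -> Rabs (RInt weighted_forcing u v) < eps.
Proof.
  pose proof bound_nonneg as M_nonneg. pose proof (cond_pos eps) as eps_pos.
  destruct (exp_small alpha alpha_pos (eps * alpha / (M + 1))) as [K HK].
  { apply Rdiv_lt_0_compat; nra. }
  assert (Hordered : forall u v, u <= v -> v < Rmin 0 K ->
                       Rabs (RInt weighted_forcing u v) < eps).
  { intros u v Huv Hv. pose proof (Rmin_l 0 K). pose proof (Rmin_r 0 K).
    assert (Hsmall : weight a v < eps * alpha / (M + 1)).
    { eapply Rle_lt_trans; [apply (weight_le_exp a alpha a_cont a_lower) | apply HK]; lra. }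
    eapply Rle_lt_trans; [apply weighted_forcing_RInt_bound, Huv |].
    apply Rle_lt_trans with (M / alpha * (eps * alpha / (M + 1))).
    - apply Rmult_le_compat_l; [apply Rdiv_le_0_compat |]; lra.
    - replace (M / alpha * (eps * alpha / (M + 1))) with (eps * (M / (M + 1))) by (field; lra).
      assert (M / (M + 1) < 1) by (apply Rmult_lt_reg_r with (M + 1); [lra | field_simplify; lra]).
      nra. }
  exists (Rmin 0 K). intros u v Hu Hv. destruct (Rle_dec u v) as [Huv | Hvu].
  - apply Hordered; auto.
  - rewrite <- (opp_RInt_swap weighted_forcing v u
                 (ex_RInt_of_continuous _ weighted_forcing_continuous _ _)).
    unfold opp; simpl. rewrite Rabs_Ropp. apply Hordered; [lra | auto].
Qed.

Lemma weighted_primitive : exists G : R -> R,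
  (forall t, is_RInt_gen weighted_forcing (Rbar_locally m_infty) (at_point t) (G t)) /\
  (forall t, is_derive G t (weighted_forcing t)) /\
  (forall t, Rabs (G t) <= M / alpha * weight a t).
Proof.
  assert (Hex : forall x y, ex_RInt weighted_forcing x y)
    by exact (ex_RInt_of_continuous _ weighted_forcing_continuous).
  destruct (RInt_tail_limit weighted_forcing weighted_forcing_continuous
             weighted_forcing_cauchy) as [L HL].
  set (G := fun t => L + RInt weighted_forcing 0 t).
  assert (Htail : forall t (eps : posreal), exists X, forall x, x < X ->
                    Rabs (RInt weighted_forcing x t - G t) < eps).
  { intros t eps. destruct (HL eps) as [X HX]. exists X. intros x Hx.
    pose proof (RInt_Chasles weighted_forcing x 0 t (Hex _ _) (Hex _ _)) as HC.
    unfold plus in HC; simpl in HC. unfold G.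
    replace (RInt weighted_forcing x t - (L + RInt weighted_forcing 0 t))
      with (RInt weighted_forcing x 0 - L) by lra.
    apply HX, Hx. }
  exists G. split; [| split].
  - intros t. apply is_RInt_gen_of_tails; [intros; apply Hex | apply Htail].
  - intros t. eapply is_derive_val.
    + apply (@is_derive_plus R_AbsRing R_NormedModule (fun _ => L));
        [apply is_derive_const | apply is_derive_primitive, weighted_forcing_continuous].
    + ring_R.
  - intros t. apply Rle_plus_epsilon. intros eps Heps.
    destruct (Htail t (mkposreal eps Heps)) as [X HX]; simpl in HX.
    set (x := Rmin (X - 1) t). pose proof (Rmin_l (X - 1) t). pose proof (Rmin_r (X - 1) t).
    assert (Hclose := HX x ltac:(unfold x; lra)). rewrite Rabs_minus_sym in Hclose.
    assert (Hbound := weighted_forcing_RInt_bound x t ltac:(unfold x; lra)).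
    pose proof (Rabs_triang_inv (G t) (RInt weighted_forcing x t)). lra.
Qed.

Lemma forced_solution : exists F : R -> R,
  (forall t, is_RInt_gen (fun s => exp (- RInt a s t) * f s)
               (Rbar_locally m_infty) (at_point t) (F t)) /\
  (forall t, Rabs (F t) <= M / alpha) /\
  (forall t, is_derive F t (- a t * F t + f t)).
Proof.
  destruct weighted_primitive as [G [HGint [HGder HGbound]]].
  exists (fun t => exp (- RInt a 0 t) * G t). split; [| split].
  - intros t.
    eapply is_RInt_gen_ext; [| exact (is_RInt_gen_scal _ (exp (- RInt a 0 t)) _ (HGint t))].
    apply filter_forall. intros [u v] s _. simpl.
    unfold weighted_forcing, weight, scal; simpl; unfold Hierarchy.mult; simpl.
    rewrite (RInt_a_split a a_cont s t), Ropp_minus_distr, exp_Ropp.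
    unfold Rminus. rewrite exp_plus, exp_Ropp.
    pose proof (exp_pos (RInt a 0 t)). field. lra.
  - intros t. rewrite Rabs_mult, Rabs_pos_eq by (left; apply exp_pos).
    apply Rle_trans with (exp (- RInt a 0 t) * (M / alpha * weight a t)).
    + apply Rmult_le_compat_l; [left; apply exp_pos | apply HGbound].
    + unfold weight. rewrite exp_Ropp. pose proof (exp_pos (RInt a 0 t)). right. field. lra.
  - intros t. eapply is_derive_val.
    + apply (@is_derive_mult R_AbsRing (fun t => exp (- RInt a 0 t)) G);
        [| apply HGder | intros; ring_R].
      apply (is_derive_comp exp (fun t => - RInt a 0 t)); [apply is_derive_exp |].
      apply (@is_derive_opp R_AbsRing R_NormedModule (fun t => RInt a 0 t)).
      apply is_derive_primitive, a_cont.
    + do 3 (unfold scal, plus, opp, Hierarchy.mult; simpl).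
      unfold weighted_forcing, weight. rewrite exp_Ropp. pose proof (exp_pos (RInt a 0 t)).
      field. lra.
Qed.

End ForcedSolution.

Section Oscillation.

Variables (a f F : R -> R) (alpha B : R).
Hypothesis a_cont : forall t, continuous a t.
Hypothesis a_lower : forall t, alpha <= a t.
Hypothesis alpha_pos : 0 < alpha.
Hypothesis f_cont : forall t, continuous f t.
Hypothesis F_bound : forall t, Rabs (F t) <= B.
Hypothesis F_ode : forall t, is_derive F t (- a t * F t + f t).

Definition shift_forcing (w s : R) : R :=
  (a s - a (s + w)) * F (s + w) + (f (s + w) - f s).

Lemma shift_forcing_continuous w s : continuous (shift_forcing w) s.
Proof.
  assert (F_cont : forall t, continuous F t) by exact (continuous_of_derive _ _ F_ode).
  unfold shift_forcing.
  apply continuous_Rplus; [apply continuous_Rmult; [apply continuous_Rminus |] |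
                           apply continuous_Rminus]; auto using continuous_shift.
Qed.

Lemma shift_difference_ode w s :
  is_derive (fun s => F (s + w) - F s) s (- a s * (F (s + w) - F s) + shift_forcing w s).
Proof.
  eapply is_derive_val.
  - apply (@is_derive_minus R_AbsRing R_NormedModule); [apply is_derive_shift, F_ode | apply F_ode].
  - unfold shift_forcing; ring_R.
Qed.

(* If a and f move by less than d under the shift w on the window [t - K, t],
   then F (t + w) - F t is small: K is long enough for the dissipation to
   forget the value at t - K, and d makes the shifted forcing small. *)
Lemma shift_difference_small w eps (Heps : 0 < eps) :
  exists d, 0 < d /\ exists K, 0 <= K /\ forall t,
    (forall s, t - K <= s <= t ->
       Rabs (a (s + w) - a s) < d /\ Rabs (f (s + w) - f s) < d) ->
    Rabs (F (t + w) - F t) < eps.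
Proof.
  assert (B_nonneg : 0 <= B) by (eapply Rle_trans; [apply Rabs_pos | apply (F_bound 0)]).
  set (d := eps * alpha / (2 * (B + 1))).
  assert (d_pos : 0 < d) by (apply Rdiv_lt_0_compat; nra).
  destruct (exp_small alpha alpha_pos (eps / (4 * (B + 1)))) as [K' HK'].
  { apply Rdiv_lt_0_compat; lra. }
  set (K := Rabs K' + 1).
  assert (K_nonneg : 0 <= K) by (pose proof (Rabs_pos K'); unfold K; lra).
  assert (HK : - K < K') by (pose proof (Rle_abs (- K')); rewrite Rabs_Ropp in *; unfold K; lra).
  exists d; split; [exact d_pos |]. exists K; split; [exact K_nonneg |].
  intros t Hwin.
  assert (Hinit : Rabs (F (t - K + w) - F (t - K)) <= 2 * B).
  { replace (F (t - K + w) - F (t - K)) with (F (t - K + w) + - F (t - K)) by ring.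
    eapply Rle_trans; [apply Rabs_triang |]. rewrite Rabs_Ropp.
    pose proof (F_bound (t - K + w)); pose proof (F_bound (t - K)); lra. }
  assert (Hforce : forall s, t - K <= s <= t -> Rabs (shift_forcing w s) <= d * B + d).
  { intros s Hs. destruct (Hwin s Hs) as [Ha Hf]. unfold shift_forcing.
    eapply Rle_trans; [apply Rabs_triang |]. rewrite Rabs_mult, (Rabs_minus_sym (a s)).
    assert (Rabs (a (s + w) - a s) * Rabs (F (s + w)) <= d * B)
      by (apply Rmult_le_compat; [apply Rabs_pos | apply Rabs_pos | lra | apply F_bound]).
    lra. }
  assert (Hdiss := dissipation_estimate a alpha a_cont a_lower alpha_pos _ _
                     (shift_difference_ode w) (shift_forcing_continuous w)
                     (t - K) t (2 * B) (d * B + d) ltac:(lra) Hinit Hforce).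
  cbv beta in Hdiss. replace (t - (t - K)) with K in Hdiss by ring.
  assert (Hexp : exp (- alpha * K) < eps / (4 * (B + 1))).
  { replace (- alpha * K) with (alpha * - K) by ring. apply HK', HK. }
  assert (Hdrift : (d * B + d) / alpha = eps / 2) by (unfold d; field; lra).
  assert (Hmemory : 2 * B * exp (- alpha * K) < eps / 2).
  { apply Rle_lt_trans with (2 * B * (eps / (4 * (B + 1)))); [apply Rmult_le_compat_l; lra |].
    replace (2 * B * (eps / (4 * (B + 1)))) with (eps / 2 * (B / (B + 1))) by (field; lra).
    assert (B / (B + 1) < 1) by (apply Rmult_lt_reg_r with (B + 1); [lra | field_simplify; lra]).
    nra. }
  lra.
Qed.

Lemma shift_difference_vanishes w (L : Rbar) (HL : L = p_infty \/ L = m_infty)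
  (Ha : is_lim (fun t => Rabs (a (t + w) - a t)) L 0)
  (Hf : is_lim (fun t => Rabs (f (t + w) - f t)) L 0) :
  is_lim (fun t => Rabs (F (t + w) - F t)) L 0.
Proof.
  apply is_lim_spec. intros eps.
  destruct (shift_difference_small w eps (cond_pos eps)) as [d [d_pos [K [K_nonneg Hsmall]]]].
  assert (Hev : Rbar_locally L (fun t => Rabs (Rabs (F (t + w) - F t) - 0) < eps)).
  { generalize (filter_and _ _
      (eventually_small_on_window _ L HL Ha (mkposreal d d_pos) K K_nonneg)
      (eventually_small_on_window _ L HL Hf (mkposreal d d_pos) K K_nonneg)).
    apply filter_imp. intros t [Hat Hft]. rewrite Rminus_0_r, Rabs_Rabsolu.
    apply Hsmall. intros s Hs.
    specialize (Hat s Hs); specialize (Hft s Hs). rewrite Rabs_Rabsolu in Hat, Hft. auto. }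
  destruct HL as [-> | ->]; exact Hev.
Qed.

End Oscillation.

Theorem lemma4p2 (alpha : R) (a f : R -> R)
  (Halpha : 0 < alpha)
  (Ha_range : forall t : R, alpha <= a t)
  (Ha : slowly_oscillating a)
  (Hf : slowly_oscillating f) :
  exists F : R -> R,
    (forall t : R,
       is_RInt_gen (fun s => exp (- RInt a s t) * f s)
         (Rbar_locally m_infty) (at_point t) (F t)) /\
    slowly_oscillating F.
Proof.
  destruct Ha as [_ [a_cont a_osc]]. destruct Hf as [[M f_bound] [f_cont f_osc]].
  destruct (forced_solution a f alpha M a_cont Ha_range Halpha f_cont f_bound)
    as [F [F_int [F_bound F_ode]]].
  exists F. split; [exact F_int |].
  split; [exists (M / alpha); exact F_bound |].
  split; [exact (continuous_of_derive _ _ F_ode) |].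
  intros w. destruct (a_osc w) as [Hap Ham]. destruct (f_osc w) as [Hfp Hfm].
  assert (Hvanish := shift_difference_vanishes a f F alpha (M / alpha)
                       a_cont Ha_range Halpha f_cont F_bound F_ode w).
  split; [apply Hvanish; [now left | exact Hap | exact Hfp] |
          apply Hvanish; [now right | exact Ham | exact Hfm]].
Qed.
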